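(* Let $(X,\|\cdot\|_X)$ be a Banach space, let $\mathcal{K}\subset X$ be compact and let $n\in\mathbb{N}$. Then the function $\gamma\mapsto d_n^\gamma(\mathcal{K})_X$ is continuous on $[0,\infty)$.
   Context: For $k\ge1$ and a norm $\|\cdot\|_{Y_k}$ on $\mathbb{R}^k$ let $B_{Y_k}=\{y\in\mathbb{R}^k:\|y\|_{Y_k}\le1\}$. For $\mathcal{K}\subset X$ and $\gamma\ge0$, the fixed Lipschitz width is $d^\gamma(\mathcal{K},Y_k)_X=\inf_{\Phi}\sup_{f\in\mathcal{K}}\inf_{y\in B_{Y_k}}\|f-\Phi(y)\|_X$, the infimum being over all maps $\Phi:B_{Y_k}\to X$ with $\|\Phi(y)-\Phi(y')\|_X\le\gamma\|y-y'\|_{Y_k}$ for all $y,y'\in B_{Y_k}$. The Lipschitz width is $d_n^\gamma(\mathcal{K})_X=\inf_{1\le k\le n}\inf_{\|\cdot\|_{Y_k}}d^\gamma(\mathcal{K},Y_k)_X$, where the inner infimum is over all norms on $\mathbb{R}^k$. *)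

From HB Require Import structures.
From mathcomp Require Import all_boot all_order all_algebra.
From mathcomp Require Import all_classical all_reals all_analysis.
Set Implicit Arguments. Unset Strict Implicit. Unset Printing Implicit Defensive.
Import Order.TTheory GRing.Theory Num.Theory.
Import numFieldNormedType.Exports.
Local Open Scope classical_set_scope.
Local Open Scope ring_scope.

Definition is_norm (R : realType) (k : nat) (N : 'rV[R]_k -> R) : Prop :=
  [/\ (forall x, N x = 0 -> x = 0),
      (forall (a : R) x, N (a *: x) = `|a| * N x) &
      (forall x y, N (x + y) <= N x + N y)].

Definition lip_on_ball (R : realType) (X : normedModType R) (k : nat)
  (N : 'rV[R]_k -> R) (gamma : R) (Phi : 'rV[R]_k -> X) : Prop :=
  forall y y', N y <= 1 -> N y' <= 1 -> `|Phi y - Phi y'| <= gamma * N (y - y').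

Definition fixed_lip_width (R : realType) (X : normedModType R) (K : set X)
  (k : nat) (N : 'rV[R]_k -> R) (gamma : R) : \bar R :=
  ereal_inf [set ereal_sup [set ereal_inf [set (`|f - Phi y|)%:E | y in [set y | N y <= 1]]
                           | f in K]
            | Phi in [set Phi | lip_on_ball N gamma Phi]].

Definition lip_width (R : realType) (X : normedModType R) (K : set X)
  (n : nat) (gamma : R) : \bar R :=
  ereal_inf [set w | exists k : nat, exists N : 'rV[R]_k -> R,
     [/\ (1 <= k <= n)%N, is_norm N & w = fixed_lip_width K N gamma]].

From HB Require Import structures.
From mathcomp Require Import all_boot all_order all_algebra.
From mathcomp Require Import all_classical all_reals all_analysis.
Set Implicit Arguments. Unset Strict Implicit. Unset Printing Implicit Defensive.
Import Order.TTheory GRing.Theory Num.Theory.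
Import numFieldNormedType.Exports.
Local Open Scope classical_set_scope.
Local Open Scope ring_scope.

(* The width is nonincreasing in gamma, and shrinking a
   b-Lipschitz map Phi towards Phi 0 by the factor a/b gives an a-Lipschitz
   map that moves each point of the unit ball by at most b - a.  Hence
   d^a <= d^b + (b - a) for a <= b, so gamma |-> d_n^gamma is 1-Lipschitz in
   the extended reals (either constantly infinite or real-valued and
   1-Lipschitz), and in particular continuous. *)

Section NormProperties.
Variables (R : realType) (k : nat) (N : 'rV[R]_k -> R).
Hypothesis normN : is_norm N.

Lemma is_norm0 : N 0 = 0.
Proof. by case: normN => _ NZ _; rewrite -(scale0r (0 : 'rV_k)) NZ normr0 mul0r. Qed.

Lemma is_norm_ge0 x : 0 <= N x.
Proof.
case: normN => _ NZ ND; have := ND x (- x).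
rewrite subrr is_norm0 -scaleN1r NZ normrN normr1 mul1r => Nx2.
by rewrite -(@pmulr_rge0 _ 2) // mulr2n mulrDl mul1r.
Qed.

End NormProperties.

Section LipschitzOnBall.
Variables (R : realType) (X : normedModType R) (k : nat) (N : 'rV[R]_k -> R).

Lemma lip_on_ballW (a b : R) (Phi : 'rV[R]_k -> X) : is_norm N -> a <= b ->
  lip_on_ball N a Phi -> lip_on_ball N b Phi.
Proof.
move=> normN ab Phi_a y y' y1 y'1; apply: le_trans (Phi_a y y' y1 y'1) _.
by rewrite ler_wpM2r // is_norm_ge0.
Qed.

Definition shrink (Phi : 'rV[R]_k -> X) (t : R) y := Phi 0 + t *: (Phi y - Phi 0).

Lemma lip_on_ball_shrink (b t : R) (Phi : 'rV[R]_k -> X) : 0 <= t ->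
  lip_on_ball N b Phi -> lip_on_ball N (t * b) (shrink Phi t).
Proof.
move=> t0 Phi_b y y' y1 y'1.
have -> : shrink Phi t y - shrink Phi t y' = t *: (Phi y - Phi y').
  by rewrite /shrink opprD addrACA subrr add0r -scalerBr opprB addrA subrK.
by rewrite normrZ ger0_norm // -mulrA ler_wpM2l // Phi_b.
Qed.

Lemma shrink_dist (b t : R) (Phi : 'rV[R]_k -> X) y : is_norm N ->
  0 <= b -> t <= 1 -> lip_on_ball N b Phi -> N y <= 1 ->
  `|Phi y - shrink Phi t y| <= (1 - t) * b.
Proof.
move=> normN b0 t1 Phi_b y1.
have -> : Phi y - shrink Phi t y = (1 - t) *: (Phi y - Phi 0).
  by rewrite /shrink scalerBl scale1r opprD addrA addrAC.
have Phi_y0 : `|Phi y - Phi 0| <= b.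
  apply: le_trans (Phi_b y 0 y1 _) _; first by rewrite is_norm0 // ler01.
  by rewrite subr0 ler_piMr.
by rewrite normrZ ger0_norm ?subr_ge0 // ler_wpM2l ?subr_ge0.
Qed.

End LipschitzOnBall.

Section ApproximationError.
Variables (R : realType) (X : normedModType R) (T : Type) (K : set X) (B : set T).

Definition approx_error (Phi : T -> X) : \bar R :=
  ereal_sup [set ereal_inf [set (`|f - Phi y|)%:E | y in B] | f in K].

Lemma approx_error_le_add (Phi Psi : T -> X) (c : R) :
  (forall y, B y -> `|Phi y - Psi y| <= c) ->
  (approx_error Psi <= approx_error Phi + c%:E)%E.
Proof.
move=> PhiPsi; apply: ge_ereal_sup => _ [f Kf <-].
apply: le_trans (leeD2r _ (ereal_sup_ubound (ex_intro2 _ _ _ Kf erefl))).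
rewrite -leeBlDr //; apply: le_ereal_inf_tmp => _ [y By <-].
rewrite leeBlDr //; apply: le_trans (ereal_inf_lbound (ex_intro2 _ _ _ By erefl)) _.
have -> : f - Psi y = (f - Phi y) + (Phi y - Psi y) by rewrite addrA subrK.
rewrite -EFinD lee_fin.
by apply: le_trans (ler_normD _ _) _; rewrite lerD2l PhiPsi.
Qed.

End ApproximationError.

Section FixedLipschitzWidth.
Variables (R : realType) (X : normedModType R) (K : set X).
Variables (k : nat) (N : 'rV[R]_k -> R).
Hypothesis normN : is_norm N.

Lemma fixed_lip_width_antitone (a b : R) : a <= b ->
  (fixed_lip_width K N b <= fixed_lip_width K N a)%E.
Proof.
move=> ab; apply: ereal_inf_le_tmp => _ [Phi Phi_a <-].
by exists Phi => //; apply: lip_on_ballW Phi_a.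
Qed.

Lemma fixed_lip_width_le_add (a b : R) : 0 <= a -> a <= b ->
  (fixed_lip_width K N a <= fixed_lip_width K N b + (b - a)%:E)%E.
Proof.
move=> a0 ab; have [->|a_neq_b] := eqVneq a b; first by rewrite subrr adde0.
have b0 : 0 < b by rewrite (le_lt_trans a0) // lt_neqAle a_neq_b.
rewrite -leeBlDr //; apply: le_ereal_inf_tmp => _ [Phi Phi_b <-].
rewrite leeBlDr //; pose t := a / b.
have shrink_a : lip_on_ball N a (shrink Phi t).
  rewrite -[a](divfK (lt0r_neq0 b0)).
  by apply: lip_on_ball_shrink Phi_b; rewrite divr_ge0 // ltW.
apply: (@le_trans _ _ (approx_error K [set y | N y <= 1] (shrink Phi t))).
  by apply: ereal_inf_lbound; exists (shrink Phi t).
apply: approx_error_le_add => y y1.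
have -> : b - a = (1 - t) * b by rewrite mulrBl mul1r divfK ?lt0r_neq0.
by apply: (shrink_dist normN) => //; [exact: ltW | rewrite ler_pdivrMr // mul1r].
Qed.

Lemma fixed_lip_width_le_dist (x y : R) : 0 <= x -> 0 <= y ->
  (fixed_lip_width K N x <= fixed_lip_width K N y + `|x - y|%:E)%E.
Proof.
move=> x0 y0; have [xy|yx] := leP x y.
  by rewrite distrC ger0_norm ?subr_ge0 // fixed_lip_width_le_add.
apply: le_trans (fixed_lip_width_antitone (ltW yx)) _.
by rewrite leeDl // lee_fin.
Qed.

End FixedLipschitzWidth.

Lemma lip_width_le_dist (R : realType) (X : normedModType R) (K : set X) (n : nat)
    (x y : R) : 0 <= x -> 0 <= y ->
  (lip_width K n x <= lip_width K n y + `|x - y|%:E)%E.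
Proof.
move=> x0 y0; rewrite -leeBlDr //; apply: le_ereal_inf_tmp => _ [k [N [kn normN ->]]].
rewrite leeBlDr //; apply: le_trans (fixed_lip_width_le_dist K normN x0 y0).
by apply: ereal_inf_lbound; exists k, N.
Qed.

Section ExtendedRealLipschitz.
Variables (R : realType) (A : set R) (w : R -> \bar R).
Hypothesis w_le_dist : forall x y, A x -> A y -> (w x <= w y + `|x - y|%:E)%E.

Lemma ereal_lipschitz_pinfty x y : A x -> A y -> w x = +oo%E -> w y = +oo%E.
Proof. by move=> Ax Ay wx; move: (w_le_dist Ax Ay); rewrite wx; case: (w y). Qed.

Lemma ereal_lipschitz_ninfty x y : A x -> A y -> w y = -oo%E -> w x = -oo%E.
Proof. by move=> Ax Ay wy; move: (w_le_dist Ax Ay); rewrite wy; case: (w x). Qed.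

Lemma ereal_lipschitz_fin x y (rx ry : R) : A x -> A y -> w x = rx%:E -> w y = ry%:E ->
  `|rx - ry| <= `|x - y|.
Proof.
move=> Ax Ay wx wy; have := w_le_dist Ax Ay; have := w_le_dist Ay Ax.
by rewrite wx wy distrC -!EFinD !lee_fin ler_distl lerBlDr => -> ->.
Qed.

Lemma ereal_lipschitz_within_continuous : {within A, continuous w}.
Proof.
apply/subspace_continuousP => g Ag.
have nearA : \forall x \near within A (nbhs g), A x by exact: near_withinT.
case wg: (w g) => [r| |].
- have w_fin : \forall x \near within A (nbhs g), w x \is a fin_num.
    apply: filterS nearA => x Ax.
    case wx: (w x) => [//| |]; first by rewrite (ereal_lipschitz_pinfty Ax Ag wx) in wg.
    by rewrite (ereal_lipschitz_ninfty Ag Ax wx) in wg.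
  rewrite /from_subspace /= wg; apply: cvg_EFin; first exact: w_fin.
  apply/cvgrPdist_le => e e0; near=> x.
  have Ax : A x by near: x.
  have wx : w x = (fine (w x))%:E by rewrite fineK //; near: x.
  apply: le_trans (ereal_lipschitz_fin Ag Ax wg wx) _.
  apply/ltW; near: x; apply: cvg_within; apply/nbhs_ballP; exists e => //.
- rewrite /from_subspace /= wg; apply: cvg_near_cst; apply: filterS nearA => x Ax.
  exact: ereal_lipschitz_pinfty Ag Ax wg.
- rewrite /from_subspace /= wg; apply: cvg_near_cst; apply: filterS nearA => x Ax.
  exact: ereal_lipschitz_ninfty Ax Ag wg.
Unshelve. all: by end_near.
Qed.

End ExtendedRealLipschitz.

Theorem theorem2p5 (R : realType) (X : completeNormedModType R) (K : set X) (n : nat) :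
  compact K ->
  {within `[0, +oo[, continuous (fun gamma : R => lip_width K n gamma)}.
Proof.
move=> _; apply: ereal_lipschitz_within_continuous => x y.
rewrite /= !in_itv /= !andbT; exact: lip_width_le_dist.
Qed.
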